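(* Let $C\subseteq\mathbb{F}_2^n$ be a binary linear code with $\mathbf{1}_n\in C$, whose dual $C^\perp$ has minimum distance $d^\perp$, and let $t$ be a positive integer such that $$d^\perp-t=\#\{u \mid C_u\neq\emptyset,\ 0<u\le n-t\}=1.$$ Then the support design $D_{n/2}$ of $C$ for weight $n/2$ is a $1$-design or a $3$-design; more precisely, the largest integer $s\ge1$ such that $D_{n/2}$ is an $s$-design satisfies $s\in\{1,3\}$.
   Context: $\mathbf{1}_n$ is the all-ones vector; $C^\perp$ is the dual code with respect to the standard inner product; $d^\perp$ is the minimum nonzero weight of $C^\perp$; $C_u=\{c\in C:\mathrm{wt}(c)=u\}$ (Hamming weight). In this situation the nonzero weights of $C$ are exactly $n/2$ and $n$, with $n$ even. An $s$-design on a point set $X$ is a collection of blocks ($k$-subsets of $X$) such that every $s$-subset of $X$ lies in the same number of blocks. The support design $D_{n/2}$ has points $\{1,\dots,n\}$ and blocks the supports $\{i:c_i\neq0\}$ of codewords $c\in C$ of weight $n/2$. *)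

From mathcomp Require Import all_boot all_order all_algebra.
Set Implicit Arguments. Unset Strict Implicit. Unset Printing Implicit Defensive.
Import GRing.Theory.
Local Open Scope ring_scope.

Definition word n := 'rV['F_2]_n.

(* linear over F_2: contains 0 and closed under addition (scalars are 0,1) *)
Definition linear_code n (C : {set word n}) : bool :=
  (0 \in C) && [forall x in C, forall y in C, x + y \in C].

Definition all_ones n : word n := \row_(i < n) 1.

Definition supp n (c : word n) : {set 'I_n} := [set i | c 0 i != 0].
Definition wt n (c : word n) : nat := #|supp c|.

Definition dotp n (x y : word n) : 'F_2 := \sum_(i < n) x 0 i * y 0 i.

Definition dual n (C : {set word n}) : {set word n} :=
  [set y | [forall x in C, dotp x y == 0]].

Definition min_dist n (D : {set word n}) (d : nat) : Prop :=
  (exists2 c, c \in D & (c != 0) && (wt c == d)) /\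
  (forall c, c \in D -> c != 0 -> (d <= wt c)%N).

Definition C_u n (C : {set word n}) (u : nat) : {set word n} :=
  [set c in C | wt c == u].

Definition support_blocks n (C : {set word n}) (k : nat) : {set {set 'I_n}} :=
  [set supp c | c in C_u C k].

Definition is_design n (B : {set {set 'I_n}}) (k s : nat) : Prop :=
  (s <= k)%N /\
  exists lam : nat, forall S : {set 'I_n}, #|S| = s ->
    #|[set b in B | S \subset b]| = lam.

From mathcomp Require Import all_boot all_order all_algebra.
From mathcomp Require Import zify.
Set Implicit Arguments. Unset Strict Implicit. Unset Printing Implicit Defensive.
Import GRing.Theory.
Local Open Scope ring_scope.

(* Since the dual distance is t + 1, C is an orthogonal array of strength t: for
   |S| <= t every pattern on S is taken by exactly |C| / 2^|S| codewords.  For a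
   t-set S, the nonzero codewords vanishing on S all have the single weight u, so
   counting weights shows that the union of their supports has the same size for
   every t-set S.  For S = supp y0 minus a point, y0 a dual word of weight t + 1,
   this union misses a point outside S; hence so it does for every t-set S, which
   yields a dual word of weight t + 1 whose support contains S.  As 1 is in C, dual
   weights are even, so t is odd, and adding two such dual words excludes t >= 5.
   For t = 1 and t = 3 every codeword other than 0 and 1 has weight n/2; for t = 3
   because the fourth point of the dual block through l, i, j maps the support of
   c bijectively onto its complement when c_i = 1 and c_j = 0.  The blocks of
   D_{n/2} through S then correspond to the codewords other than 1 that are 1 on S,
   whose number is |C| / 2^t - 1 for every t-set S, but differs between supp y0 and
   a (t + 1)-set that is not the support of a dual word. *)

Lemma F2_pchar : 2 \in [pchar 'F_2]. Proof. exact: pchar_Fp. Qed.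

Lemma F2P (x : 'F_2) : x = 0 \/ x = 1.
Proof. by case: x => [[|[|m]] lt_m2]; [left|right|by []]; apply: val_inj. Qed.

Lemma F2_neq0 (x : 'F_2) : (x != 0) = (x == 1).
Proof. by case: (F2P x) => ->. Qed.

Lemma F2_nat m : (m%:R : 'F_2) = (odd m)%:R.
Proof. by rewrite -(GRing.natr_mod_pchar F2_pchar) modn2. Qed.

Lemma F2_add_eq0 (x y : 'F_2) : (x + y == 0) = (x == y).
Proof. by rewrite addr_eq0 (oppr_pchar2 F2_pchar). Qed.

Lemma sum_card_incidence (I T : finType) (A : {pred I}) (F : I -> {set T}) :
  (\sum_(i in A) #|F i| = \sum_x #|[set i in A | x \in F i]|)%N.
Proof.
transitivity (\sum_(i in A) \sum_x (x \in F i) : nat)%N.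
  by apply: eq_bigr => i _; rewrite -sum1_card big_mkcond.
rewrite exchange_big; apply: eq_bigr => x _.
rewrite -sum1_card big_mkcond [RHS]big_mkcond; apply: eq_bigr => i _.
by rewrite !inE; case: (i \in A); case: (x \in F i).
Qed.

Section Words.
Variable n : nat.
Implicit Types (c y : word n) (A S : {set 'I_n}).

Definition ind_word A : word n := \row_i (i \in A)%:R.

Lemma word_entry c i : c 0 i = (i \in supp c)%:R.
Proof. by rewrite inE F2_neq0; case: (F2P (c 0 i)) => ->. Qed.

Lemma supp_ind A : supp (ind_word A) = A.
Proof. by apply/setP => i; rewrite inE mxE; case: (i \in A). Qed.

Lemma ind_supp c : ind_word (supp c) = c.
Proof. by apply/rowP => i; rewrite mxE -word_entry. Qed.

Lemma supp_inj : injective (@supp n).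
Proof. by move=> c1 c2 eq_supp; rewrite -(ind_supp c1) eq_supp ind_supp. Qed.

Lemma supp0 : supp (0 : word n) = set0.
Proof. by apply/setP => i; rewrite !inE mxE. Qed.

Lemma supp_all_ones : supp (all_ones n) = setT.
Proof. by apply/setP => i; rewrite !inE mxE. Qed.

Lemma in_suppD c1 c2 i : (i \in supp (c1 + c2)) = (i \in supp c1) (+) (i \in supp c2).
Proof.
rewrite !inE mxE !F2_neq0.
by case: (F2P (c1 0 i)) => ->; case: (F2P (c2 0 i)) => ->.
Qed.

Lemma supp_all_onesD c : supp (all_ones n + c) = ~: supp c.
Proof. by apply/setP => i; rewrite in_suppD supp_all_ones !inE. Qed.

Lemma word_addxx c : c + c = 0.
Proof. by apply/rowP => i; rewrite !mxE (addrr_pchar2 F2_pchar). Qed.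

Lemma wt_le c : (wt c <= n)%N.
Proof. by have := max_card (supp c); rewrite card_ord. Qed.

Lemma wt_eq0 c : (wt c == 0)%N = (c == 0).
Proof.
rewrite cards_eq0; apply/eqP/eqP => [supp_c0|->]; last exact: supp0.
by apply: supp_inj; rewrite supp_c0 supp0.
Qed.

Lemma entry1_neq0 c i : c 0 i = 1 -> c != 0.
Proof. by move=> ci1; apply: contra_eq_neq ci1 => ->; rewrite mxE. Qed.

Lemma wt0 : wt (0 : word n) = 0%N.
Proof. by rewrite /wt supp0 cards0. Qed.

Lemma wt_eqn c : (wt c == n) = (c == all_ones n).
Proof.
apply/eqP/eqP => [wt_n|->]; last by rewrite /wt supp_all_ones cardsT card_ord.
apply: supp_inj; rewrite supp_all_ones; apply/eqP.
by rewrite eqEcard subsetT cardsT card_ord /= -/(wt c) wt_n.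
Qed.

Lemma exists_in_supp c : c != 0 -> exists i, i \in supp c.
Proof. by move=> c_neq0; apply/set0Pn; rewrite -cards_eq0 -/(wt c) wt_eq0. Qed.

Lemma exists_notin_supp c : c != all_ones n -> exists i, i \notin supp c.
Proof.
move=> c_neq1; apply/existsP; rewrite -negb_forall; apply: contra c_neq1 => /forallP c_full.
by rewrite -(inj_eq (@supp_inj)) supp_all_ones eqEsubset subsetT; apply/subsetP => i _.
Qed.

Lemma wt_all_onesD c : wt (all_ones n + c) = (n - wt c)%N.
Proof. by rewrite /wt supp_all_onesD cardsCs setCK card_ord. Qed.

Lemma wtD_le_common c1 c2 (X : {set 'I_n}) : X \subset supp c1 -> X \subset supp c2 ->
  (wt (c1 + c2)%R <= (wt c1 - #|X|) + (wt c2 - #|X|))%N.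
Proof.
move=> X1 X2; rewrite /wt -!cardsDS //; apply: leq_trans (leq_card_setU _ _).
apply: subset_leq_card; apply/subsetP => i; rewrite in_suppD in_setU !in_setD.
case iX: (i \in X); last by case: (_ \in supp c1); case: (_ \in supp c2).
by rewrite (subsetP X1) ?(subsetP X2).
Qed.

Lemma dotpC x y : dotp x y = dotp y x.
Proof. by apply: eq_bigr => i _; rewrite mulrC. Qed.

Lemma dotpDr x y1 y2 : dotp x (y1 + y2) = dotp x y1 + dotp x y2.
Proof. by rewrite -big_split; apply: eq_bigr => i _; rewrite mxE mulrDr. Qed.

Lemma dotp_ind c A : dotp c (ind_word A) = \sum_(i in A) c 0 i.
Proof.
rewrite /dotp [RHS]big_mkcond; apply: eq_bigr => i _.
by rewrite mxE; case: (i \in A); rewrite ?mulr1 ?mulr0.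
Qed.

Lemma dotp_all_ones c : dotp c (all_ones n) = (odd (wt c))%:R.
Proof.
rewrite dotpC -[c in dotp _ c]ind_supp dotp_ind -F2_nat -sumr_const.
by apply: eq_bigr => i _; rewrite mxE.
Qed.

Definition code_supp (D : {set word n}) := \bigcup_(c in D) supp c.

Lemma card_coord_half (D : {set word n}) c0 x a :
  (forall c, c \in D -> c + c0 \in D) -> c0 0 x = 1 ->
  #|D| = #|[set c in D | c 0 x == a]|.*2.
Proof.
move=> D_c0 c0x1; set P := [set c : word n | c 0 x == a].
have -> : [set c in D | c 0 x == a] = D :&: P by apply/setP => c; rewrite !inE.
rewrite -(cardsID P D) -addnn; congr (_ + _)%N.
have flip c : (c + c0) 0 x == a = (c 0 x != a).
  by rewrite mxE c0x1; case: (F2P (c 0 x)) => ->; case: (F2P a) => ->.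
have -> : D :\: P = (fun c => c + c0) @: (D :&: P).
  apply/setP => c; rewrite !inE; apply/andP/imsetP => [[cP cD]|[d]].
    exists (c + c0); last by rewrite -addrA word_addxx addr0.
    by rewrite !inE flip cP D_c0.
  by rewrite !inE => /andP[dD dP] ->; rewrite flip dP D_c0.
by rewrite card_imset //; apply: addIr.
Qed.

End Words.

Section LinearCode.
Variables (n : nat) (C : {set word n}).
Hypothesis C_linear : linear_code C.
Implicit Types (c y p : word n) (S : {set 'I_n}).

Lemma code0 : 0 \in C.
Proof. by case/andP: C_linear. Qed.

Lemma codeD c1 c2 : c1 \in C -> c2 \in C -> c1 + c2 \in C.
Proof. by case/andP: C_linear => _ /forall_inP C_add /C_add/forall_inP; apply. Qed.

Lemma codeZ a c : c \in C -> a *: c \in C.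
Proof. by case: (F2P a) => ->; rewrite ?scale0r ?scale1r ?code0. Qed.

Lemma code_card_gt0 : (0 < #|C|)%N.
Proof. by apply/card_gt0P; exists 0; apply: code0. Qed.

Lemma code_sum (I : finType) (P : pred I) (F : I -> word n) :
  (forall i, P i -> F i \in C) -> \sum_(i | P i) F i \in C.
Proof. by move=> FC; apply: (big_ind (fun c => c \in C)); [exact: code0 | exact: codeD |]. Qed.

Lemma dualP y : reflect {in C, forall c, dotp c y = 0} (y \in dual C).
Proof. by rewrite inE; apply: (iffP forall_inP) => y_orth c /y_orth => [/eqP|->]. Qed.

Lemma dualD y1 y2 : y1 \in dual C -> y2 \in dual C -> y1 + y2 \in dual C.
Proof.
move=> /dualP y1_orth /dualP y2_orth; apply/dualP => c cC.
by rewrite dotpDr y1_orth ?y2_orth ?addr0.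
Qed.

Lemma dual_pairP a b : a != b ->
  reflect {in C, forall c, c 0 a = c 0 b} (ind_word [set a; b] \in dual C).
Proof.
move=> ab; apply: (iffP (dualP _)) => eq_ab c /eq_ab;
  rewrite dotp_ind big_setU1 ?inE //= big_set1.
  by move/eqP; rewrite F2_add_eq0 => /eqP.
by move=> ->; rewrite (addrr_pchar2 F2_pchar).
Qed.

Lemma dual_coord y a c : y \in dual C -> a \in supp y -> c \in C ->
  c 0 a = \sum_(i in supp y :\ a) c 0 i.
Proof.
move=> /dualP y_orth ay /y_orth; rewrite -[y in dotp _ y]ind_supp dotp_ind (big_setD1 a) //=.
by move/eqP; rewrite F2_add_eq0 => /eqP.
Qed.

Lemma dual_wt_even y : all_ones n \in C -> y \in dual C -> ~~ odd (wt y).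
Proof.
by move=> C1 /dualP/(_ _ C1); rewrite dotpC dotp_all_ones; case: (odd _).
Qed.

Definition dual_free S := forall y, y \in dual C -> supp y \subset S -> y = 0.

Definition fiber S p := [set c in C | S \subset [set i | c 0 i == p 0 i]].

Definition vanishing S := fiber S 0.

Lemma fiberU1 x S p : fiber (x |: S) p = [set c in fiber S p | c 0 x == p 0 x].
Proof. by apply/setP => c; rewrite /fiber !inE subUset sub1set inE andbA andbAC. Qed.

Lemma fiber_all_ones S : fiber S (all_ones n) = [set c in C | S \subset supp c].
Proof.
suff agree1 c : [set i | c 0 i == all_ones n 0 i] = supp c.
  by apply/setP => c; rewrite /fiber !inE agree1.
by apply/setP => i; rewrite !inE mxE F2_neq0.
Qed.

Lemma fiberD_vanishing S p c c' : c \in fiber S p -> c' \in vanishing S ->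
  c + c' \in fiber S p.
Proof.
rewrite !inE => /andP[cC /subsetP cS] /andP[c'C /subsetP c'S]; rewrite codeD //=.
apply/subsetP => i iS; move: (cS i iS) (c'S i iS).
by rewrite !inE !mxE => /eqP-> /eqP->; rewrite addr0.
Qed.

Lemma vanishing_linear S : linear_code (vanishing S).
Proof.
apply/andP; split; first by rewrite inE code0; apply/subsetP => i _; rewrite inE.
by apply/forall_inP => c1 c1S; apply/forall_inP => c2 c2S; apply: fiberD_vanishing.
Qed.

Lemma dual_word_of_vanishing S x :
  x \notin S -> (forall p, fiber S p != set0) -> {in vanishing S, forall c, c 0 x = 0} ->
  exists y, [/\ y \in dual C, y 0 x = 1 & supp y \subset x |: S].
Proof.
move=> xS onto vanish_x.
pose e i : word n := ind_word [set i].
pose b i := odflt 0 [pick c in fiber S (e i)].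
have b_fiber i : b i \in fiber S (e i).
  by rewrite /b; case: pickP => //= fiber0; case/set0Pn: (onto (e i)) => c /[!fiber0].
have bC i : b i \in C by have := b_fiber i; rewrite inE => /andP[].
have bE i j : j \in S -> b i 0 j = (j == i)%:R.
  have := b_fiber i; rewrite inE => /andP[_ /subsetP S_e] /S_e.
  by rewrite inE mxE inE => /eqP.
(* Every c in C differs from \sum_(i in S) c_i b_i by a word vanishing on S, so
   c_x = \sum_(i in S) c_i (b i)_x: this is the orthogonality of the y below. *)
exists (\row_j if j == x then 1 else if j \in S then b j 0 x else 0); split.
- apply/dualP => c cC.
  pose c' := c + \sum_(i in S) c 0 i *: b i.
  have c'_vanish : c' \in vanishing S.
    rewrite inE codeD ?code_sum //=; last by move=> i _; apply: codeZ.
    apply/subsetP => j jS; rewrite inE !mxE summxE (bigD1 j) //= big1 => [|i /andP[_ ij]].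
      by rewrite mxE bE // eqxx mulr1 addr0 (addrr_pchar2 F2_pchar).
    by rewrite mxE bE // eq_sym (negbTE ij) mulr0.
  transitivity (c' 0 x); last exact: vanish_x.
  rewrite [RHS]mxE summxE /dotp (bigD1 x) //= mxE eqxx mulr1.
  congr (_ + _); rewrite big_mkcond [RHS]big_mkcond; apply: eq_bigr => j _.
  rewrite !mxE; case: eqP => [->|_]; first by rewrite (negbTE xS).
  by case: (j \in S); rewrite ?mulr0.
- by rewrite mxE eqxx.
- apply/subsetP => j; rewrite inE mxE !inE.
  by case: (j == x) => //; case: (j \in S); rewrite ?eqxx.
Qed.

Lemma exists_vanishing_coord1 S x : x \notin S -> (forall p, fiber S p != set0) ->
  dual_free (x |: S) -> exists2 c, c \in vanishing S & c 0 x = 1.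
Proof.
move=> xS onto free_xS.
have /exists_inP[c ? /eqP ?] : [exists c in vanishing S, c 0 x == 1]; last by exists c.
apply: contraT; rewrite negb_exists_in => /forall_inP vanish.
have vanish_x : {in vanishing S, forall c, c 0 x = 0}.
  by move=> c /vanish; rewrite -F2_neq0 negbK => /eqP.
have [y [y_dual yx1 supp_y]] := dual_word_of_vanishing xS onto vanish_x.
by move: (entry1_neq0 yx1); rewrite (free_xS y y_dual supp_y) eqxx.
Qed.

Lemma card_fiber S p : dual_free S -> (#|fiber S p| * 2 ^ #|S|)%N = #|C|.
Proof.
move card_S: #|S| => m; elim: m S card_S p => [|m IH] S card_S p free_S.
  have -> : S = set0 by apply/eqP; rewrite -cards_eq0 card_S.
  by rewrite muln1; apply: eq_card => c; rewrite inE sub0set andbT.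
have [x xS] : exists x, x \in S by apply/set0Pn; rewrite -card_gt0 card_S.
set S' := S :\ x.
have card_S' : #|S'| = m by move: card_S; rewrite (cardsD1 x) xS => -[].
have free_S' : dual_free S'.
  by move=> y y_dual yS'; apply: free_S y_dual (subset_trans yS' (subsetDl _ _)).
have onto q : fiber S' q != set0.
  by rewrite -card_gt0 -(ltn_pmul2r (expn_gt0 2 m)) mul0n IH ?code_card_gt0.
have xS' : x \notin S' by rewrite !inE eqxx.
have free_xS' : dual_free (x |: S') by rewrite setD1K.
have [c0 c0_vanish c0x] := exists_vanishing_coord1 xS' onto free_xS'.
have c0_shift c : c \in fiber S' p -> c + c0 \in fiber S' p by move/fiberD_vanishing; apply.
rewrite -(setD1K xS) fiberU1 -/S' -(IH S' card_S' p) // (card_coord_half (p 0 x) c0_shift c0x).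
by rewrite expnS mulnA muln2.
Qed.

Lemma fiber_neq0 S p : dual_free S -> fiber S p != set0.
Proof.
move=> free_S.
by rewrite -card_gt0 -(ltn_pmul2r (expn_gt0 2 #|S|)) mul0n card_fiber ?code_card_gt0.
Qed.

Lemma supp_vanishing S c : c \in vanishing S -> supp c \subset ~: S.
Proof.
rewrite inE => /andP[_ /subsetP S0]; apply/subsetP => i; rewrite !inE.
by apply: contra => /S0; rewrite inE mxE.
Qed.

Lemma notin_code_supp_vanishing y a : y \in dual C -> a \in supp y ->
  a \notin code_supp (vanishing (supp y :\ a)).
Proof.
move=> y_dual ay; apply/bigcupP => -[c c_fiber]; rewrite inE.
move: (c_fiber); rewrite inE => /andP[cC /subsetP c0].
rewrite (dual_coord y_dual ay cC) big1 ?eqxx // => i /c0.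
by rewrite inE mxE => /eqP.
Qed.

Lemma fiber_all_ones_dual_supp y a : y \in dual C -> a \in supp y -> ~~ odd (wt y) ->
  fiber (supp y) (all_ones n) = fiber (supp y :\ a) (all_ones n).
Proof.
move=> y_dual ay wt_even; rewrite -{1}(setD1K ay) fiberU1; apply/setP => c.
rewrite inE andb_idr // fiber_all_ones inE => /andP[cC /subsetP c1].
rewrite (dual_coord y_dual ay cC) mxE (eq_bigr (fun _ => 1)) => [|i /c1]; last first.
  by rewrite word_entry => ->.
move: wt_even; rewrite sumr_const F2_nat /wt (cardsD1 a) ay.
by rewrite oddS; case: (odd _).
Qed.

Lemma sum_wt_code : (2 * \sum_(c in C) wt c)%N = (#|C| * #|code_supp C|)%N.
Proof.
rewrite sum_card_incidence big_distrr mulnC -sum_nat_const [RHS]big_mkcond.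
apply: eq_bigr => x _ /=; case: ifP => [/bigcupP[c0 c0C xc0] | x_out].
  have c0x1 : c0 0 x = 1 by rewrite word_entry xc0.
  rewrite [RHS](@card_coord_half _ C c0 x 1) => [|c cC|//]; last exact: codeD.
  by rewrite mul2n; congr (_.*2); apply: eq_card => c; rewrite !inE F2_neq0.
apply/eqP; rewrite muln_eq0 cards_eq0 /=; apply/eqP/setP => c; rewrite !inE.
by apply/negP => /andP[cC xc]; move/negP: x_out; apply; apply/bigcupP; exists c; rewrite ?inE.
Qed.

End LinearCode.

Section Designs.
Variables (n k : nat) (B : {set {set 'I_n}}).
Hypothesis card_block : {in B, forall b : {set 'I_n}, #|b| = k}.
Implicit Types S : {set 'I_n}.

Definition blocks_through S := [set b in B | S \subset b].

Lemma double_count_blocks_through S :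
  (#|blocks_through S| * (k - #|S|) = \sum_(x in ~: S) #|blocks_through (x |: S)|)%N.
Proof.
rewrite -sum_nat_const (eq_bigr (fun b => #|b :\: S|)) => [|b]; last first.
  by rewrite /blocks_through inE => /andP[bB Sb]; rewrite cardsDS // (card_block bB).
rewrite [LHS]sum_card_incidence [RHS]big_mkcond; apply: eq_bigr => x _.
rewrite inE; case: (boolP (x \in S)) => xS /=.
  by apply/eqP; rewrite cards_eq0; apply/eqP/setP => b; rewrite !inE xS andbF.
apply: eq_card => b; rewrite !inE xS subUset sub1set.
by case: (b \in B); case: (x \in b); rewrite ?andbF ?andbT.
Qed.

Lemma is_design_pred s : is_design B k s.+1 -> is_design B k s.
Proof.
case=> lt_sk [lam lamP]; split; first exact: ltnW.
exists ((n - s) * lam %/ (k - s))%N => S card_S.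
have := double_count_blocks_through S.
rewrite (eq_bigr (fun _ => lam)) => [|x]; last first.
  by rewrite inE => xS; apply: lamP; rewrite cardsU1 xS card_S.
by rewrite sum_nat_const [#|~: S|]cardsCs setCK card_ord card_S => <-; rewrite mulnK // subn_gt0.
Qed.

Lemma is_design_le s s' : (s <= s')%N -> is_design B k s' -> is_design B k s.
Proof.
move=> le_ss'; rewrite -(subnK le_ss'); elim: (s' - s)%N => // d IH.
by move/is_design_pred; apply: IH.
Qed.

End Designs.

Section SupportDesign.
Variables (n : nat) (C : {set word n}).
Hypothesis C1 : all_ones n \in C.
Hypothesis n_gt0 : (0 < n)%N.
Hypothesis wt_half : {in C, forall c : word n, c != 0 -> c != all_ones n -> (wt c).*2 = n}.
Let B := support_blocks C n./2.
Implicit Types S : {set 'I_n}.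

Lemma card_support_block : {in B, forall b : {set 'I_n}, #|b| = n./2}.
Proof. by move=> b /imsetP[c]; rewrite inE => /andP[_ /eqP <-] ->. Qed.

Lemma card_blocks_through_support S : S != set0 ->
  (#|blocks_through B S|).+1 = #|fiber C S (all_ones n)|.
Proof.
move=> S_neq0; set D := [set c in C_u C n./2 | S \subset supp c].
have -> : blocks_through B S = @supp n @: D.
  apply/setP => b; rewrite inE; apply/andP/imsetP => [[/imsetP[c cC ->] Sb]|[c]].
    by exists c; rewrite // inE cC.
  by rewrite inE => /andP[cC Sc] ->; rewrite imset_f.
have half_neqn : n./2 != n.
  by rewrite neq_ltn ltn_half_double -addnn -{1}[n]add0n ltn_add2r n_gt0.
have -> : fiber C S (all_ones n) = all_ones n |: D.
  apply/setP => c; rewrite fiber_all_ones !inE.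
  have [->|c_neq1] /= := eqVneq c (all_ones n); first by rewrite C1 supp_all_ones subsetT.
  have [cC|] //= := boolP (c \in C).
  have [Sc|] := boolP (S \subset supp c); rewrite ?andbF ?andbT //.
  have c_neq0 : c != 0 by apply: contraNneq S_neq0 => c0; rewrite -subset0 -(supp0 n) -c0.
  by rewrite -[in n./2](wt_half cC c_neq0 c_neq1) doubleK eqxx.
rewrite card_imset; last exact: supp_inj.
by rewrite cardsU1 !inE /wt supp_all_ones cardsT card_ord eq_sym (negbTE half_neqn) andbF.
Qed.

Lemma support_designP s : (0 < s)%N ->
  is_design B n./2 s <->
  (s <= n./2)%N /\ exists m, forall S, #|S| = s -> #|fiber C S (all_ones n)| = m.
Proof.
move=> s_gt0; have S_neq0 S : #|S| = s -> S != set0 by rewrite -card_gt0 => ->.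
split=> [[le_s [lam lamP]] | [le_s [m mP]]]; split=> //.
  by exists lam.+1 => S card_S; rewrite -card_blocks_through_support ?S_neq0 // lamP.
exists m.-1 => S card_S.
by rewrite -(mP S card_S) -card_blocks_through_support ?S_neq0.
Qed.

End SupportDesign.

Section DualDistance.
Variables (n t : nat) (C : {set word n}) (y0 c0 : word n).
Hypothesis C_linear : linear_code C.
Hypothesis C1 : all_ones n \in C.
Hypothesis dual_min : {in dual C, forall y : word n, y != 0 -> (t < wt y)%N}.
Hypothesis y0_dual : y0 \in dual C.
Hypothesis wt_y0 : wt y0 = t.+1.
Hypothesis c0C : c0 \in C.
Hypothesis wt_c0 : (0 < wt c0 <= n - t)%N.
Hypothesis single_wt : {in C, forall c : word n, (0 < wt c <= n - t)%N -> wt c = wt c0}.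
Implicit Types (c y : word n) (S X : {set 'I_n}).

Lemma small_dual_free S : (#|S| <= t)%N -> dual_free C S.
Proof.
move=> le_St y y_dual Sy; apply/eqP; apply: contraT => y_neq0.
by have := leq_trans (dual_min y_dual y_neq0) (leq_trans (subset_leq_card Sy) le_St); rewrite ltnn.
Qed.

Lemma card_fiber_small S p : (#|S| <= t)%N -> (#|fiber C S p| * 2 ^ #|S|)%N = #|C|.
Proof. by move=> le_St; apply: card_fiber => //; apply: small_dual_free. Qed.

Lemma odd_t : odd t.
Proof. by have := dual_wt_even C1 y0_dual; rewrite wt_y0 /= negbK. Qed.

Lemma wt_y0_lt : (t.+1 < n)%N.
Proof.
rewrite ltn_neqAle -{2}wt_y0 wt_le andbT; apply/eqP => n_eq.
have y0_1 : y0 = all_ones n by apply/eqP; rewrite -wt_eqn wt_y0 n_eq.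
have wt_c0_1 : wt c0 = 1%N by move: wt_c0; lia.
by move/dualP/(_ c0 c0C): y0_dual; rewrite y0_1 dotp_all_ones wt_c0_1 => /eqP.
Qed.

Lemma y0_neq0 : y0 != 0.
Proof. by rewrite -wt_eq0 wt_y0. Qed.

Lemma card_supp_y0D1 a : a \in supp y0 -> #|supp y0 :\ a| = t.
Proof. by move=> ay0; move: wt_y0; rewrite /wt (cardsD1 a) ay0 => -[]. Qed.

Lemma t_gt0 : (0 < t)%N.
Proof. by rewrite lt0n; apply: contraTneq odd_t => ->. Qed.

Lemma y0_neq1 : y0 != all_ones n.
Proof. by rewrite -wt_eqn wt_y0 neq_ltn wt_y0_lt. Qed.

Lemma dual_min_common y1 y2 X l : y1 \in dual C -> y2 \in dual C ->
  X \subset supp y1 -> X \subset supp y2 -> l \notin supp y1 -> l \in supp y2 ->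
  (t < (wt y1 - #|X|) + (wt y2 - #|X|))%N.
Proof.
move=> y1_dual y2_dual X1 X2 ly1 ly2; apply: leq_trans (wtD_le_common X1 X2).
apply: dual_min; first exact: dualD.
have l_in : l \in supp (y1 + y2) by rewrite in_suppD (negbTE ly1) ly2.
by apply: contraTneq l_in => ->; rewrite supp0 inE.
Qed.

Lemma sum_wt_vanishing S : #|S| = t ->
  (\sum_(c in vanishing C S) wt c = (#|vanishing C S| - 1) * wt c0)%N.
Proof.
move=> card_S; have vanishing0 := code0 (vanishing_linear C_linear S).
rewrite (bigD1 0) //= wt0 add0n (eq_bigr (fun _ => wt c0)) => [|c /andP[c_fiber c_neq0]].
  rewrite (eq_bigl (mem (vanishing C S :\ 0))) => [|c]; last by rewrite !inE andbC.
  by rewrite sum_nat_const [#|vanishing C S|](cardsD1 0) vanishing0 subn1.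
move: (c_fiber); rewrite inE => /andP[cC _]; apply: single_wt => //.
have card_CS : #|~: S| = (n - t)%N by rewrite cardsCs setCK card_ord card_S.
by rewrite lt0n wt_eq0 c_neq0 -card_CS subset_leq_card // (supp_vanishing c_fiber).
Qed.

Lemma card_code_supp_vanishing S S' : #|S| = t -> #|S'| = t ->
  #|code_supp (vanishing C S)| = #|code_supp (vanishing C S')|.
Proof.
move=> card_S card_S'.
have card_vanishing S1 : #|S1| = t -> (#|vanishing C S1| * 2 ^ t)%N = #|C|.
  by move=> card_S1; rewrite -card_S1 card_fiber_small ?card_S1.
have same_card S1 : #|S1| = t -> #|vanishing C S1| = #|vanishing C S|.
  by move=> card_S1; apply/eqP; rewrite -(eqn_pmul2r (expn_gt0 2 t)) !card_vanishing.
have double_count S1 : #|S1| = t ->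
    (#|vanishing C S1| * #|code_supp (vanishing C S1)| = 2 * ((#|vanishing C S| - 1) * wt c0))%N.
  move=> card_S1; rewrite -(sum_wt_code (vanishing_linear C_linear S1)).
  by rewrite sum_wt_vanishing // same_card.
have vanishing_gt0 : (0 < #|vanishing C S|)%N.
  by rewrite card_gt0; apply: (fiber_neq0 C_linear); apply: small_dual_free; rewrite card_S.
apply/eqP; rewrite -(eqn_pmul2l vanishing_gt0) -{2}(same_card S') //.
by rewrite !double_count.
Qed.

Lemma dual_block_through S : #|S| = t ->
  exists2 x, x \notin S & exists2 y, y \in dual C & supp y = x |: S.
Proof.
move=> card_S.
have [a ay0] := exists_in_supp y0_neq0.
set S0 := supp y0 :\ a.
have card_S0 : #|S0| = t by apply: card_supp_y0D1.
have cs_sub S1 : code_supp (vanishing C S1) \subset ~: S1.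
  by apply/bigcupsP => c; apply: supp_vanishing.
have : (#|code_supp (vanishing C S)| < #|~: S|)%N.
  have -> : #|~: S| = #|~: S0| by rewrite [LHS]cardsCs [RHS]cardsCs !setCK card_S card_S0.
  rewrite (card_code_supp_vanishing card_S card_S0); apply/proper_card/properP.
  split; first exact: cs_sub.
  by exists a; [rewrite !inE eqxx | apply: notin_code_supp_vanishing].
rewrite ltnNge => /negP not_sub.
have /subsetPn[x xS x_out] : ~~ (~: S \subset code_supp (vanishing C S)).
  by apply/negP => sub; apply: not_sub; apply: subset_leq_card.
have vanish_x : {in vanishing C S, forall c, c 0 x = 0}.
  move=> c c_vanish; rewrite word_entry; have [xc|//] := boolP (x \in supp c).
  by case/negP: x_out; apply/bigcupP; exists c.
have S_free p : fiber C S p != set0.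
  by apply: (fiber_neq0 C_linear); apply: small_dual_free; rewrite card_S.
rewrite inE in xS.
have [y [y_dual yx1 supp_y]] := dual_word_of_vanishing C_linear xS S_free vanish_x.
exists x => //; exists y => //; apply/eqP; rewrite eqEcard supp_y cardsU1 xS card_S /=.
exact: dual_min y_dual (entry1_neq0 yx1).
Qed.

Lemma t_lt4 : (t < 4)%N.
Proof.
rewrite ltnNge; apply/negP => t_ge4.
have [a ay0] := exists_in_supp y0_neq0.
have card_y0a := card_supp_y0D1 ay0.
have [b by0a] : exists b, b \in supp y0 :\ a.
  by apply/set0Pn; rewrite -card_gt0 card_y0a; lia.
set X := supp y0 :\ a :\ b.
have card_X : #|X| = t.-1 by rewrite -card_y0a [#|supp y0 :\ a|](cardsD1 b) by0a.
have X_y0 : X \subset supp y0 by apply: subset_trans (subsetDl _ _) (subsetDl _ _).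
have [l ly0] := exists_notin_supp y0_neq1.
have lX : l \notin X by apply: contra ly0; apply: (subsetP X_y0).
have card_lX : #|l |: X| = t by rewrite cardsU1 lX card_X; lia.
have [x xlX [y y_dual supp_y]] := dual_block_through card_lX.
have X_y : X \subset supp y by rewrite supp_y; apply: subset_trans (subsetU1 l X) (subsetU1 x _).
have ly : l \in supp y by rewrite supp_y !inE eqxx orbT.
have wt_y : wt y = t.+1 by rewrite /wt supp_y cardsU1 xlX card_lX.
have := dual_min_common y0_dual y_dual X_y0 X_y ly0 ly; rewrite wt_y0 wt_y card_X.
by move: t_ge4; clear -t; lia.
Qed.

Lemma t_eq1_or3 : t = 1%N \/ t = 3%N.
Proof.
suff small_odd m : odd m -> (m < 4)%N -> m = 1%N \/ m = 3%N by apply: small_odd odd_t t_lt4.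
by case: m => [|[|[|[|m]]]] //; [left | right].
Qed.

Lemma code_separates_points a b : (1 < t)%N -> {in C, forall c, c 0 a = c 0 b} -> a = b.
Proof.
move=> t_gt1 eq_ab; apply/eqP; apply: contraT => ab.
have ind_dual : ind_word [set a; b] \in dual C by apply/dual_pairP.
have ind_neq0 : ind_word [set a; b] != 0 by rewrite -wt_eq0 /wt supp_ind cards2 ab.
by have := dual_min ind_dual ind_neq0; rewrite /wt supp_ind cards2 ab ltnNge t_gt1.
Qed.

Lemma wt_half_t1 c : t = 1%N -> c \in C -> c != 0 -> c != all_ones n -> (wt c).*2 = n.
Proof.
move=> t1 cC c_neq0 c_neq1.
have wt_c_gt0 : (0 < wt c)%N by rewrite lt0n wt_eq0.
have wt_c_lt : (wt c < n)%N by rewrite ltn_neqAle wt_eqn c_neq1 wt_le.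
have wt_c : wt c = wt c0 by apply: single_wt => //; rewrite wt_c_gt0 t1; lia.
have : wt (all_ones n + c) = wt c0.
  by apply: single_wt; [exact: codeD | rewrite wt_all_onesD t1; lia].
by rewrite wt_all_onesD -wt_c -addnn; lia.
Qed.

Section Strength3.
Hypothesis t3 : t = 3%N.

(* The weight-4 dual words form a Steiner system S(3, 4, n); for distinct i, j the
   point x completing the block through l, i, j satisfies c_x = c_l + c_i + c_j. *)
Definition fourth_point i j l :=
  odflt l [pick x | [forall c in C, c 0 x == c 0 l + c 0 i + c 0 j]].

Lemma fourth_pointP i j l : i != j ->
  {in C, forall c, c 0 (fourth_point i j l) = c 0 l + c 0 i + c 0 j}.
Proof.
move=> ij; rewrite /fourth_point; case: pickP => [x /forall_inP x_ok c /x_ok/eqP //| none].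
suff [x x_ok] : exists x, {in C, forall c, c 0 x = c 0 l + c 0 i + c 0 j}.
  by have /forall_inP := none x; case=> c /x_ok ->; rewrite eqxx.
have [->|li] := eqVneq l i; first by exists j => c _; rewrite (addrr_pchar2 F2_pchar) add0r.
have [->|lj] := eqVneq l j.
  by exists i => c _; rewrite addrAC (addrr_pchar2 F2_pchar) add0r.
have card_lij : #|l |: [set i; j]| = t by rewrite t3 cardsU1 cards2 !inE negb_or li lj ij.
have [x x_lij [y y_dual supp_y]] := dual_block_through card_lij.
have xy : x \in supp y by rewrite supp_y setU11.
exists x => c cC; rewrite (dual_coord y_dual xy cC) supp_y setU1K //.
rewrite big_setU1 ?big_setU1 ?big_set1 ?inE ?negb_or ?li ?lj ?ij //=.
by rewrite addrA.
Qed.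

Lemma fourth_point_inj i j : i != j -> injective (fourth_point i j).
Proof.
move=> ij l1 l2 eq_fourth; apply: code_separates_points; first by rewrite t3.
move=> c cC; apply: (addIr (c 0 i)); apply: (addIr (c 0 j)).
by rewrite -!(fourth_pointP _ ij cC) eq_fourth.
Qed.

Lemma wt_half_t3 c : c \in C -> c != 0 -> c != all_ones n -> (wt c).*2 = n.
Proof.
move=> cC c_neq0 c_neq1.
have [i ic] := exists_in_supp c_neq0.
have [j jc] := exists_notin_supp c_neq1.
have ij : i != j by apply: contraNneq jc => <-.
set phi := fourth_point i j.
have phi_flip l : (phi l \in supp c) = (l \notin supp c).
  rewrite !inE !F2_neq0 fourth_pointP // [c 0 i]word_entry [c 0 j]word_entry ic (negbTE jc).
  by rewrite addr0; case: (F2P (c 0 l)) => ->.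
have phi_inj : injective phi by apply: fourth_point_inj.
have phi_sub (A B : {set 'I_n}) : {in A, forall l, phi l \in B} -> (#|A| <= #|B|)%N.
  move=> AB; rewrite -(card_imset A phi_inj).
  by apply/subset_leq_card/subsetP => _ /imsetP[l /AB ? ->].
have le_c_Cc : (#|supp c| <= #|~: supp c|)%N by apply: phi_sub => l; rewrite in_setC phi_flip negbK.
have le_Cc_c : (#|~: supp c| <= #|supp c|)%N by apply: phi_sub => l; rewrite in_setC phi_flip.
transitivity (#|supp c| + #|~: supp c|)%N; last by rewrite cardsC card_ord.
by rewrite -addnn; congr (_ + _)%N; apply/eqP; rewrite eqn_leq le_c_Cc.
Qed.

End Strength3.

Lemma wt_half : {in C, forall c, c != 0 -> c != all_ones n -> (wt c).*2 = n}.
Proof. by move=> c; case: t_eq1_or3 => [/wt_half_t1|/wt_half_t3]; apply. Qed.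

Lemma c0_neq0 : c0 != 0.
Proof. by rewrite -wt_eq0 -lt0n; case/andP: wt_c0. Qed.

Lemma c0_neq1 : c0 != all_ones n.
Proof.
have := t_gt0; have := wt_y0_lt; rewrite -wt_eqn neq_ltn; lia.
Qed.

Lemma exists_non_dual_supp :
  exists2 S : {set 'I_n}, #|S| = t.+1 & {in dual C, forall y, supp y != S}.
Proof.
case: t_eq1_or3 => t_eq.
  have [a ac0] := exists_in_supp c0_neq0; have [l lc0] := exists_notin_supp c0_neq1.
  have al : a != l by apply: contraNneq lc0 => <-.
  exists [set a; l]; first by rewrite cards2 al t_eq.
  move=> y y_dual; apply: contraTneq y_dual => supp_y.
  rewrite -(ind_supp y) supp_y; apply/negP => /(dual_pairP _ al)/(_ c0 c0C).
  by rewrite !word_entry ac0 (negbTE lc0).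
have [a ay0] := exists_in_supp y0_neq0; have [l ly0] := exists_notin_supp y0_neq1.
set X := supp y0 :\ a.
have lX : l \notin X by rewrite in_setD1 (negbTE ly0) andbF.
exists (l |: X); first by rewrite cardsU1 lX card_supp_y0D1.
move=> y y_dual; apply/eqP => supp_y.
have X_y : X \subset supp y by rewrite supp_y subsetU1.
have ly : l \in supp y by rewrite supp_y setU11.
have := dual_min_common y0_dual y_dual (subsetDl _ _) X_y ly0 ly.
by rewrite wt_y0 /wt supp_y cardsU1 lX card_supp_y0D1 // t_eq.
Qed.

Lemma card_fiber_supp_y0 : (#|fiber C (supp y0) (all_ones n)| * 2 ^ t)%N = #|C|.
Proof.
have [a ay0] := exists_in_supp y0_neq0.
rewrite (fiber_all_ones_dual_supp y0_dual ay0) ?(dual_wt_even C1) //.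
by rewrite -{1}(card_supp_y0D1 ay0) card_fiber_small ?card_supp_y0D1.
Qed.

Lemma card_fiber_non_dual_supp S : #|S| = t.+1 -> {in dual C, forall y, supp y != S} ->
  (#|fiber C S (all_ones n)| * 2 ^ t.+1)%N = #|C|.
Proof.
move=> card_S S_non_dual; rewrite -card_S; apply: card_fiber => // y y_dual Sy.
apply/eqP; apply: contraT => y_neq0; have := S_non_dual y y_dual.
by rewrite eqEcard Sy card_S dual_min.
Qed.

Lemma support_design_strength :
  is_design (support_blocks C n./2) n./2 t /\
  forall s, (t < s)%N -> ~ is_design (support_blocks C n./2) n./2 s.
Proof.
have n_gt0 : (0 < n)%N by apply: leq_trans wt_y0_lt.
have designP := support_designP C1 n_gt0 wt_half.
split=> [|s lt_ts /(is_design_le (@card_support_block _ C) lt_ts)].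
  apply/(designP _ t_gt0); split.
    have := wt_half c0C c0_neq0 c0_neq1; case/andP: wt_c0 => _.
    by rewrite -[in n./2](wt_half c0C c0_neq0 c0_neq1) doubleK; lia.
  exists (#|C| %/ 2 ^ t)%N => S card_S.
  by rewrite -(card_fiber_small (all_ones n) (eq_leq card_S)) card_S mulnK ?expn_gt0.
case/designP => // _ [m fiber_m].
have [S card_S S_non_dual] := exists_non_dual_supp.
have m_2t : (m * 2 ^ t)%N = #|C| by rewrite -(fiber_m _ wt_y0) card_fiber_supp_y0.
have := card_fiber_non_dual_supp card_S S_non_dual.
rewrite fiber_m // expnS mulnCA m_2t -{2}[#|C|]mul1n => /eqP.
by rewrite eqn_pmul2r ?(code_card_gt0 C_linear).
Qed.

End DualDistance.

Lemma single_weight_code n (C : {set word n}) t :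
  #|[set u : 'I_n.+1 | (0 < u)%N && (u <= n - t)%N && (C_u C u != set0)]| = 1%N ->
  exists c0, [/\ c0 \in C, (0 < wt c0 <= n - t)%N &
    {in C, forall c, (0 < wt c <= n - t)%N -> wt c = wt c0}].
Proof.
set U := [set u : 'I_n.+1 | _] => /eqP/cards1P[u0 U1].
have : u0 \in U by rewrite U1 set11.
rewrite inE => /andP[/andP[u0_gt0 u0_le] /set0Pn[c0]]; rewrite inE => /andP[c0C /eqP wt_c0].
exists c0; split=> //; first by rewrite wt_c0 u0_gt0.
move=> c cC wt_c; have : inord (wt c) \in U.
  rewrite inE inordK ?ltnS ?wt_le // wt_c; apply/set0Pn; exists c.
  by rewrite inE cC eqxx.
by rewrite U1 inE wt_c0 => /eqP <-; rewrite inordK // ltnS wt_le.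
Qed.


Theorem lemma3p1 (n : nat) (C : {set word n}) (dperp t : nat) :
  linear_code C ->
  all_ones n \in C ->
  min_dist (dual C) dperp ->
  (0 < t)%N ->
  (dperp - t)%N = 1%N ->
  #|[set u : 'I_n.+1 | (0 < u)%N && (u <= n - t)%N && (C_u C u != set0)]| = 1%N ->
  exists s : nat, (s = 1 \/ s = 3)%N /\
    is_design (support_blocks C n./2) n./2 s /\
    (forall s' : nat, (s < s')%N -> ~ is_design (support_blocks C n./2) n./2 s').
Proof.
move=> C_linear C1 dual_dist _ dperp_t single.
have dperp_eq : dperp = t.+1 by lia.
move: dual_dist; rewrite dperp_eq => -[[y0 y0_dual /andP[_ /eqP wt_y0]] dual_min].
have [c0 [c0C wt_c0 single_wt]] := single_weight_code single.
exists t; split.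
  exact: t_eq1_or3 C_linear C1 dual_min y0_dual wt_y0 c0C wt_c0 single_wt.
exact: support_design_strength C_linear C1 dual_min y0_dual wt_y0 c0C wt_c0 single_wt.
Qed.
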